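(* Let $n\ge1$, let $\check{\mathbf{F}}\in\mathbb{C}^{n\times n}$ have entries $(\check{\mathbf{F}})_{j,k}=\frac{1}{\sqrt n}\left(\cos\frac{2jk\pi}{n}+i\sin\frac{2jk\pi}{n}\right)$ for $j,k=0,\dots,n-1$, and let $\mathbf{C}:=\operatorname{Diag}(\{\cos\frac{k\pi}{n}\}_{k=0}^{n-1})$, $\mathbf{S}:=\operatorname{Diag}(\{\sin\frac{k\pi}{n}\}_{k=0}^{n-1})$. Then $\mathbf{C}\check{\mathbf{F}}^2\mathbf{S}+\mathbf{S}\check{\mathbf{F}}^2\mathbf{C}=\mathbf{0}$.
   Context: $i$ is the imaginary unit; $\operatorname{Diag}(\{d_k\})$ is the diagonal matrix with diagonal entries $d_0,\dots,d_{n-1}$. *)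

From HB Require Import structures.
From mathcomp Require Import all_boot all_order all_algebra.
From mathcomp Require Import reals trigo.
From mathcomp Require Import complex.
Set Implicit Arguments. Unset Strict Implicit. Unset Printing Implicit Defensive.
Import Order.TTheory GRing.Theory Num.Theory.
Local Open Scope ring_scope.
Local Open Scope complex_scope.

Definition Fcheck (R : realType) (n : nat) : 'M[R[i]]_n :=
  \matrix_(j < n, k < n)
    ((Num.sqrt (n%:R : R))^-1 *
       cos ((2 * (j : nat)%:R * (k : nat)%:R * pi) / n%:R)
     +i* ((Num.sqrt (n%:R : R))^-1 *
       sin ((2 * (j : nat)%:R * (k : nat)%:R * pi) / n%:R))).

Definition Cdiag (R : realType) (n : nat) : 'M[R[i]]_n :=
  diag_mx (\row_(k < n) ((cos (((k : nat)%:R * pi) / n%:R) : R)%:C)).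
Definition Sdiag (R : realType) (n : nat) : 'M[R[i]]_n :=
  diag_mx (\row_(k < n) ((sin (((k : nat)%:R * pi) / n%:R) : R)%:C)).

(* Write e(x) = cos x + i sin x and w = e(2 pi / n), a primitive n-th root of
   unity.  Then sqrt n * Fcheck = (w^(jk))_{j,k}, so the (j,l) entry of
   Fcheck^2 is (1/n) sum_k (w^(j+l))^k, i.e. 1 if n | j + l and 0 otherwise.
   Conjugating by the diagonal matrices multiplies that entry by
   cos a_j sin a_l + sin a_j cos a_l = sin (a_j + a_l) with a_k = k pi / n,
   and sin (a_j + a_l) = 0 whenever n | j + l. *)
From HB Require Import structures.
From mathcomp Require Import all_boot all_order all_algebra.
From mathcomp Require Import reals trigo.
From mathcomp Require Import complex.
From mathcomp Require Import ring lra.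
Set Implicit Arguments. Unset Strict Implicit. Unset Printing Implicit Defensive.
Import Order.TTheory GRing.Theory Num.Theory.
Local Open Scope ring_scope.
Local Open Scope complex_scope.

Lemma sum_expr_prim_root (R : idomainType) (n m : nat) (z : R) :
  n.-primitive_root z ->
  \sum_(k < n) (z ^+ m) ^+ k = if (n %| m)%N then n%:R else 0.
Proof.
move=> prim_z; rewrite (prim_order_dvd prim_z); case: eqP => [-> | zm_neq1].
  by rewrite (eq_bigr (fun=> 1)) => [|k _]; rewrite ?expr1n // sumr_const card_ord.
have : (z ^+ m - 1) * \sum_(k < n) (z ^+ m) ^+ k = 0.
  by rewrite -subrX1 exprAC (prim_expr_order prim_z) expr1n subrr.
by move/eqP; rewrite mulf_eq0 subr_eq0 (introF eqP zm_neq1) => /eqP.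
Qed.

Lemma sin_pi_natmul (R : realType) (q : nat) : sin ((pi : R) *+ q) = 0.
Proof. by have := alternatingn (@sinDpi R) q 0; rewrite add0r sin0 mulr0. Qed.

Section ComplexExponential.
Variable R : realType.

Definition expi (x : R) : R[i] := cos x +i* sin x.

Lemma expi0 : expi 0 = 1.
Proof. by rewrite /expi cos0 sin0. Qed.

Lemma expiD x y : expi (x + y) = expi x * expi y.
Proof. by rewrite /expi cosD sinD /=; congr (_ +i* _); ring. Qed.

Lemma expiMn x k : expi (x *+ k) = expi x ^+ k.
Proof. by elim: k => [|k IH]; rewrite ?expi0 // mulrS expiD IH exprS. Qed.

Lemma expi_2pi : expi (pi *+ 2) = 1.
Proof. by rewrite /expi cos2pi sin2pi. Qed.

Lemma expi_mulr2n_neq1 y : 0 < y < pi -> expi (y *+ 2) != 1.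
Proof.
move=> /sin_gt0_pi sin_gt0; apply/eqP => -[cos_eq1 _].
by move: cos_eq1; rewrite cos_mulr2n cos2sin2; nra.
Qed.

End ComplexExponential.

Section DFT.
Variables (R : realType) (n : nat).
Hypothesis n_gt0 : (0 < n)%N.

Local Notation omega := (expi (pi *+ 2 / n%:R : R)).

Let n_neq0 : (n%:R : R) != 0.
Proof. by rewrite pnatr_eq0 -lt0n. Qed.

Lemma prim_root_expi : n.-primitive_root omega.
Proof.
rewrite /primitive_root_of_unity n_gt0; apply/forallP => i.
rewrite unity_rootE -expiMn; have [-> | i_neq_n] := eqVneq i.+1 n.
  have -> : (pi *+ 2 / n%:R : R) *+ n = pi *+ 2.
    by rewrite -[LHS]mulr_natr -[pi *+ 2]mulr_natr; field.
  by rewrite expi_2pi !eqxx.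
have -> : (pi *+ 2 / n%:R : R) *+ i.+1 = (pi * i.+1%:R / n%:R) *+ 2.
  by rewrite -[LHS]mulr_natr -[RHS]mulr_natr -[pi *+ 2]mulr_natr; field.
have i_lt_n : (i.+1 < n)%N by rewrite ltn_neqAle i_neq_n ltn_ord.
have n_gt0R : (0 : R) < n%:R by rewrite ltr0n.
rewrite eqbF_neg expi_mulr2n_neq1 // divr_gt0 ?mulr_gt0 ?pi_gt0 ?ltr0n //=.
by rewrite ltr_pdivrMr // ltr_pM2l ?pi_gt0 // ltr_nat.
Qed.

Lemma Fcheck_expi (j k : 'I_n) :
  Fcheck R n j k = (Num.sqrt (n%:R : R))^-1%:C * omega ^+ (j * k).
Proof.
have arg_eq : (2 * j%:R * k%:R * pi / n%:R : R) = (pi *+ 2 / n%:R) *+ (j * k).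
  by rewrite -[RHS]mulr_natr -[pi *+ 2]mulr_natr natrM; field.
rewrite mxE -expiMn -arg_eq /expi /=.
by congr (_ +i* _); ring.
Qed.

Lemma Fcheck_sqr (j l : 'I_n) :
  (Fcheck R n *m Fcheck R n) j l = if (n %| j + l)%N then 1 else 0.
Proof.
rewrite mxE.
under eq_bigr => k _ do
  rewrite !Fcheck_expi mulrACA -rmorphM -exprD mulnC -mulnDr mulnC exprM.
rewrite -mulr_sumr sum_expr_prim_root ?prim_root_expi //.
case: ifP => _; last by rewrite mulr0.
rewrite -invfM -expr2 sqr_sqrtr ?ler0n //.
by rewrite -(rmorph_nat (real_complex R)) -rmorphM /= mulVf.
Qed.

End DFT.

Theorem mainTheorem7 (R : realType) (n : nat) (hn : (1 <= n)%N) :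
  Cdiag R n *m (Fcheck R n *m Fcheck R n) *m Sdiag R n
  + Sdiag R n *m (Fcheck R n *m Fcheck R n) *m Cdiag R n = 0.
Proof.
rewrite /Cdiag /Sdiag !mul_diag_mx !mul_mx_diag; apply/matrixP => j l.
move: (Fcheck_sqr R hn j l); rewrite !mxE => ->.
case: ifP => [/dvdnP[q jl_eq] | _]; last by rewrite !mulr0 !mul0r addr0.
rewrite !mulr1 -!rmorphM -rmorphD /= addrC -sinD.
have -> : (j%:R * pi / n%:R + l%:R * pi / n%:R : R) = pi *+ q.
  rewrite -[RHS]mulr_natr -mulrDl -mulrDl -natrD jl_eq natrM.
  by field; rewrite pnatr_eq0 -lt0n.
by rewrite sin_pi_natmul.
Qed.
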